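(* For every positive integer $m$ and every complex number $\alpha \neq 0$, $$\sum_{k=1}^m \left[ {m \atop k} \right] k^\alpha = \sum_{j=1}^m j!\, S(\alpha, j) \left[ {m+1 \atop j+1} \right].$$
   Context: For a complex number $\alpha \neq 0$ and a positive integer $k$, the Stirling function of the second kind is $$S(\alpha, k) = \frac{1}{k!} \sum_{j=1}^k (-1)^{k-j} \binom{k}{j} j^\alpha,$$ where for a positive integer $j$, $j^\alpha = e^{\alpha \ln j}$ with $\ln j$ the real logarithm. For nonnegative integers $n,k$, $\left[ {n \atop k} \right]$ denotes the unsigned Stirling number of the first kind, i.e. the number of permutations of an $n$-element set with exactly $k$ cycles; equivalently $x(x+1)\cdots(x+n-1) = \sum_{k=0}^n \left[ {n \atop k} \right] x^k$. *)

From mathcomp Require Import all_boot all_fingroup.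
From Stdlib Require Import Reals.

(* unsigned Stirling number of the first kind: number of permutations of an
   n-element set with exactly k cycles (cycles = orbits, fixed points included) *)
Definition stirling1 (n k : nat) : nat :=
  #|[set s : {perm 'I_n} | #|porbits s| == k]|.

Open Scope R_scope.

Record Cx : Type := mkC { Re : R ; Im : R }.

Definition C0 : Cx := mkC 0 0.
Definition Cadd (z w : Cx) : Cx := mkC (Re z + Re w) (Im z + Im w).
Definition Cmul (z w : Cx) : Cx :=
  mkC (Re z * Re w - Im z * Im w) (Re z * Im w + Im z * Re w).
Definition Cscal (r : R) (z : Cx) : Cx := mkC (r * Re z) (r * Im z).

(* sum_{i=1}^{n} f i *)
Fixpoint Csum1 (n : nat) (f : nat -> Cx) : Cx :=
  match n with
  | O => C0
  | S n' => Cadd (Csum1 n' f) (f n)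
  end.

(* j^alpha := e^{alpha ln j} for a positive integer j, ln the real logarithm:
   e^{(a+ib) l} = e^{a l} (cos (b l) + i sin (b l)) *)
Definition Cnatpow (j : nat) (alpha : Cx) : Cx :=
  let l := ln (INR j) in
  mkC (exp (Re alpha * l) * cos (Im alpha * l))
      (exp (Re alpha * l) * sin (Im alpha * l)).

Definition stirling2f (alpha : Cx) (k : nat) : Cx :=
  Cscal (/ INR (k`!)%nat)
    (Csum1 k (fun j => Cscal (pow (-1) (k - j)%nat * INR 'C(k, j)) (Cnatpow j alpha))).

From mathcomp Require Import all_boot all_fingroup.
From Stdlib Require Import Reals Lra.

(* The identity  sum_k [m,k] k^alpha = sum_j j! S(alpha,j) [m+1,j+1]  is
   linear in the values F(k) = k^alpha: both sides are real-linear
   combinations of F(1), ..., F(m), so it suffices to compare coefficients.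
   Expanding  j! S(alpha,j) = sum_i (-1)^(j-i) C(j,i) F(i),  the coefficient
   of F(i) on the right is  sum_j (-1)^(j+i) C(j,i) [m+1,j+1], and the heart of
   the proof is the Stirling-number identity

     sum_(j <= m) (-1)^(j+i) C(j,i) [m+1,j+1] = [m,i],

   proved by induction on m from the recurrence
   [n+1,k+1] = [n,k] + n [n,k+1]. *)

Set Implicit Arguments.
Unset Strict Implicit.
Unset Printing Implicit Defensive.

Section PermutationCycles.

Local Open Scope group_scope.

Lemma porbit_fixpoint (T : finType) (s : {perm T}) x :
  s x = x -> porbit s x = [set x].
Proof.
move=> sx; have sXx i : (s ^+ i) x = x.
  by elim: i => [|i IHi]; rewrite ?expg0 ?perm1 // expgSr permM IHi.
apply/setP=> y; rewrite inE; apply/porbitP/eqP => [[i ->] // | ->].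
by exists 0%nat; rewrite expg0 perm1.
Qed.

Section InsertFixedPoint.

(* The permutations of 'I_n.+1 fixing the last point [x] are exactly the
   extensions [lift_perm x x t] of the permutations [t] of 'I_n, and such an
   extension has one cycle more than [t], namely [[set x]]. *)
Variable n : nat.
Let x : 'I_n.+1 := ord_max.

Lemma lift_perm_expg (t : 'S_n) i k :
  (lift_perm x x t ^+ i) (lift x k) = lift x ((t ^+ i) k).
Proof.
elim: i => [|i IHi]; first by rewrite !expg0 !perm1.
by rewrite !expgSr !permM IHi lift_perm_lift.
Qed.

Lemma porbit_lift_perm (t : 'S_n) k :
  porbit (lift_perm x x t) (lift x k) = lift x @: porbit t k.
Proof.
apply/setP=> y; apply/porbitP/imsetP => [[i ->] | [z /porbitP[i ->] ->]].
  by exists ((t ^+ i) k); rewrite ?mem_porbit ?lift_perm_expg.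
by exists i; rewrite lift_perm_expg.
Qed.

Lemma porbits_lift_perm (t : 'S_n) :
  porbits (lift_perm x x t) = [set x] |: [set lift x @: A | A : {set 'I_n} in porbits t].
Proof.
have fix_x : lift_perm x x t x = x by rewrite lift_perm_id.
apply/setP=> B; rewrite !inE; apply/imsetP/idP => [[y _ ->] | ].
  case: (unliftP x y) => [k|] ->; last by rewrite porbit_fixpoint ?eqxx.
  by rewrite porbit_lift_perm imset_f ?orbT ?imset_f.
case/orP=> [/eqP -> | /imsetP[_ /imsetP[k _ ->] ->]].
  by exists x; rewrite ?porbit_fixpoint.
by exists (lift x k); rewrite ?porbit_lift_perm.
Qed.

Lemma card_porbits_lift_perm (t : 'S_n) :
  #|porbits (lift_perm x x t)| = #|porbits t|.+1.
Proof.
rewrite porbits_lift_perm cardsU1 card_imset; last first.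
  by apply: imset_inj; apply: lift_inj.
suff -> : [set x] \notin [set lift x @: A | A : {set 'I_n} in porbits t] by [].
apply/imsetP => [[A _ xA]].
have /imsetP[z _ /eqP] : x \in lift x @: A by rewrite -xA set11.
by rewrite (negbTE (neq_lift x z)).
Qed.

Lemma lift_perm_inj : injective (lift_perm x x : 'S_n -> 'S_n.+1).
Proof.
move=> s t st; apply/permP=> k; apply: (@lift_inj _ x).
by rewrite -!(@lift_perm_lift _ x x) st.
Qed.

Lemma lift_perm_onto (s : 'S_n.+1) : s x = x -> exists t, s = lift_perm x x t.
Proof.
move=> sx; have s_lift k : {j | s (lift x k) = lift x j}.
  case: (unliftP x (s (lift x k))) => [j|] E; first by exists j.
  by move: (neq_lift x k); rewrite (perm_inj (etrans E (esym sx))) eqxx.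
pose f k := sval (s_lift k).
have fE k : lift x (f k) = s (lift x k) by rewrite (svalP (s_lift k)).
have f_inj : injective f.
  by move=> a b fab; apply: (@lift_inj _ x); apply: (@perm_inj _ s); rewrite -!fE fab.
exists (perm f_inj); apply/permP=> y; case: (unliftP x y) => [k|] ->.
  by rewrite lift_perm_lift permE fE.
by rewrite lift_perm_id.
Qed.

Lemma card_fixing_perms k :
  #|[set s : 'S_n.+1 | (#|porbits s| == k) && (s x == x)]| =
  #|[set t : 'S_n | #|porbits t|.+1 == k]|.
Proof.
rewrite -(card_imset _ lift_perm_inj); apply: eq_card => s; rewrite !inE.
apply/andP/imsetP => [[/eqP <- /eqP /lift_perm_onto[t ->]] | [t]].
  by exists t; rewrite // inE card_porbits_lift_perm.
by rewrite inE => /eqP <- ->; rewrite card_porbits_lift_perm lift_perm_id.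
Qed.

End InsertFixedPoint.
(* A permutation not fixing [x] is obtained in exactly one way from a
   permutation [s] fixing [x] and a point [y != x], as [tperm x y * s]: this
   splices [x] into the cycle of [y], merging two cycles into one. *)
Section SpliceFixedPoint.

Variables (T : finType) (x : T).

Lemma card_porbits_tperm_fixpoint (s : {perm T}) y :
  s x = x -> y != x -> #|porbits (tperm x y * s)|.+1 = #|porbits s|.
Proof.
move=> sx yx; have := porbits_mul_tperm s x y.
rewrite porbit_sym porbit_fixpoint // inE yx eq_sym yx /=.
by rewrite addn1 addn2 => -[].
Qed.

Lemma card_nonfixing_perms k :
  #|[set s : {perm T} | (#|porbits s| == k) && (s x != x)]| =
  (#|[set s : {perm T} | (#|porbits s| == k.+1) && (s x == x)]| * #|T|.-1)%nat.
Proof.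
pose merge (p : {perm T} * T) := tperm x p.2 * p.1.
rewrite -(cardsC1 x) -cardsX -(card_in_imset (f := merge)).
  apply: eq_card => s; rewrite !inE; apply/andP/imsetP => [[/eqP ck sx] | ].
    pose y := s^-1 x; have sy : s y = x by rewrite permKV.
    have yx : y != x by apply: contra sx => /eqP yx; rewrite -{1}yx sy.
    have s1x : (tperm x y * s) x = x by rewrite permM tpermL.
    exists (tperm x y * s, y); last by rewrite /merge mulgA tperm2 mul1g.
    rewrite !inE yx s1x eqxx andbT /= -ck.
    by rewrite andbT -(card_porbits_tperm_fixpoint s1x yx) mulgA tperm2 mul1g.
  case=> -[s1 y]; rewrite !inE /= => /andP[/andP[/eqP c1 /eqP s1x] yx] ->.
  rewrite /merge /=; split.
    by rewrite -eqSS (card_porbits_tperm_fixpoint s1x yx) c1.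
  by rewrite permM tpermL -[X in _ != X]s1x (inj_eq perm_inj).
move=> [s1 y] [t1 z]; rewrite !inE /= => /andP[/andP[_ /eqP s1x] _].
move=> /andP[/andP[_ /eqP t1x] _]; rewrite /merge /= => st.
have yz : y = z.
  by apply: (@perm_inj _ (tperm x y * s1)); rewrite {2}st !permM !tpermR s1x t1x.
by rewrite -yz in st *; rewrite (mulgI _ _ _ st).
Qed.

End SpliceFixedPoint.

End PermutationCycles.

Lemma stirling1_0n k : stirling1 0 k = (k == 0%nat).
Proof.
have no_cycles (s : 'S_0) : #|porbits s| = 0%nat.
  by apply/eqP; rewrite cards_eq0; apply/eqP/setP => A; rewrite inE;
    apply/imsetP => -[[]].
case: k => [|k]; last by apply/eqP; rewrite cards_eq0; apply/eqP/setP => s;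
  rewrite !inE no_cycles.
rewrite /= -[1%nat]/(0`!) -card_Sn -cardsT; apply: eq_card => s.
by rewrite !inE no_cycles.
Qed.

Lemma stirling1_n0 n : stirling1 n.+1 0 = 0%nat.
Proof.
apply/eqP; rewrite cards_eq0; apply/eqP/setP => s; rewrite !inE cards_eq0.
by apply/set0Pn; exists (porbit s ord0); apply: imset_f.
Qed.

Lemma stirling1_rec n k :
  stirling1 n.+1 k.+1 = (stirling1 n k + n * stirling1 n k.+1)%nat.
Proof.
have fixing j : #|[set s : 'S_n.+1 |
    (#|porbits s| == j.+1) && (s ord_max == ord_max)]| = stirling1 n j.
  by rewrite card_fixing_perms; apply: eq_card => t; rewrite !inE eqSS.
rewrite {1}/stirling1 -(cardsID [set s : 'S_n.+1 | s ord_max == ord_max]).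
congr (_ + _)%nat; first by rewrite -fixing; apply: eq_card => s; rewrite !inE.
transitivity #|[set s : 'S_n.+1 | (#|porbits s| == k.+1) && (s ord_max != ord_max)]|.
  by apply: eq_card => s; rewrite !inE andbC.
by rewrite card_nonfixing_perms fixing card_ord mulnC.
Qed.

Lemma stirling1_gt n k : (n < k)%nat -> stirling1 n k = 0%nat.
Proof.
elim: n k => [|n IHn] [|k] //; first by rewrite stirling1_0n.
by rewrite ltnS stirling1_rec => ltnk; rewrite !IHn ?muln0 // ltnW.
Qed.

Open Scope R_scope.

(* [rsum n f] is the real sum f 0 + ... + f (n - 1). *)
Fixpoint rsum (n : nat) (f : nat -> R) : R :=
  if n is n'.+1 then rsum n' f + f n' else 0.

Lemma rsumS (n : nat) (f : nat -> R) : rsum n.+1 f = rsum n f + f n.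
Proof. by []. Qed.

Lemma rsum_ext (n : nat) (f g : nat -> R) :
  (forall i, (i < n)%nat -> f i = g i) -> rsum n f = rsum n g.
Proof.
elim: n => [|n IHn] //= fg; rewrite fg // IHn // => i lt_in.
by rewrite fg // ltnW.
Qed.

Lemma rsum_add (n : nat) (f g : nat -> R) :
  rsum n (fun i => f i + g i) = rsum n f + rsum n g.
Proof. by elim: n => [|n /= ->]; rewrite /=; lra. Qed.

Lemma rsum_scal (n : nat) (c : R) (f : nat -> R) :
  rsum n (fun i => c * f i) = c * rsum n f.
Proof. by elim: n => [|n /= ->]; rewrite /=; lra. Qed.

Lemma rsum_first (n : nat) (f : nat -> R) :
  rsum n.+1 f = f 0%nat + rsum n (fun i => f i.+1).
Proof. by elim: n => [|n /= ->]; rewrite /=; lra. Qed.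

Lemma rsum_swap (n m : nat) (h : nat -> nat -> R) :
  rsum n (fun i => rsum m (h i)) = rsum m (fun j => rsum n (h^~ j)).
Proof.
elim: n => [|n /= ->]; last by rewrite -rsum_add.
by elim: m => [|m /= <-]; rewrite /=; lra.
Qed.

Lemma rsum_widen (n m : nat) (f : nat -> R) : (n <= m)%nat ->
  (forall i, (n <= i < m)%nat -> f i = 0) -> rsum n f = rsum m f.
Proof.
move=> /subnKC <-; elim: (m - n)%nat => [|d IHd] f0; first by rewrite addn0.
have f0' i : (n <= i < n + d)%nat -> f i = 0.
  by case/andP=> ni lt_id; rewrite f0 // ni addnS ltnW.
by rewrite addnS /= -(IHd f0') f0 ?Rplus_0_r // leq_addr addnS ltnSn.
Qed.

Lemma neg1_pow_sub (i j : nat) :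
  (i <= j)%nat -> (-1) ^ (j - i) = (-1) ^ (j + i).
Proof.
move=> /subnK {2}<-; rewrite -addnA addnn -mul2n -plusE -multE.
by rewrite pow_add pow_1_even Rmult_1_r.
Qed.

Notation stirR n k := (INR (stirling1 n k)).

Lemma stirling1_recR n k :
  stirR n.+1 k.+1 = stirR n k + INR n * stirR n k.+1.
Proof. by rewrite stirling1_rec plus_INR mult_INR. Qed.

Lemma stirling1_binomial_sum m i :
  rsum m.+1 (fun j => (-1) ^ (j + i) * INR 'C(j, i) * stirR m.+1 j.+1) = stirR m i.
Proof.
elim: m i => [|m IHm] i.
  by rewrite /= stirling1_recR; case: i => [|i]; rewrite !stirling1_0n ?bin0n /=; lra.
rewrite (@rsum_ext _ _ (fun j => (-1) ^ (j + i) * INR 'C(j, i) * stirR m.+1 j +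
   INR m.+1 * ((-1) ^ (j + i) * INR 'C(j, i) * stirR m.+1 j.+1))); last first.
  by move=> j _; rewrite stirling1_recR; ring.
rewrite rsum_add rsum_scal [rsum m.+2 (fun j => _ * stirR m.+1 j.+1)]rsumS.
rewrite IHm (stirling1_gt (ltnSn _)) rsum_first stirling1_n0.
case: i => [|i].
  rewrite (@rsum_ext _ _
      (fun j => -1 * ((-1) ^ (j + 0) * INR 'C(j, 0) * stirR m.+1 j.+1))).
    rewrite rsum_scal IHm; case: m {IHm} => [|m]; rewrite ?stirling1_n0 /=; lra.
  by move=> j _; rewrite !bin0 /=; ring.
rewrite (@rsum_ext _ _
    (fun j => -1 * ((-1) ^ (j + i.+1) * INR 'C(j, i.+1) * stirR m.+1 j.+1)
              + (-1) ^ (j + i) * INR 'C(j, i) * stirR m.+1 j.+1)).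
  by rewrite rsum_add rsum_scal !IHm stirling1_recR S_INR /=; ring.
by move=> j _; rewrite binS plus_INR addSn addnS /=; ring.
Qed.

(* For any F, the combination sum_k [m,k] F(k) equals
   sum_j [m+1,j+1] (sum_i (-1)^(j-i) C(j,i) F(i)), all indices running over
   1..m; the inner sums are j! S(alpha,j) when F(k) = k^alpha. *)
Lemma stirling1_inversion m (F : nat -> R) :
  rsum m (fun k => stirR m k.+1 * F k.+1) =
  rsum m (fun j => stirR m.+1 j.+2 *
    rsum j.+1 (fun i => (-1) ^ (j.+1 - i.+1) * INR 'C(j.+1, i.+1) * F i.+1)).
Proof.
pose c j i := (-1) ^ (j.+1 + i.+1) * INR 'C(j.+1, i.+1) * stirR m.+1 j.+2.
have widen j : (j < m)%nat ->
    stirR m.+1 j.+2 *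
      rsum j.+1 (fun i => (-1) ^ (j.+1 - i.+1) * INR 'C(j.+1, i.+1) * F i.+1)
    = rsum m (fun i => F i.+1 * c j i).
  move=> lt_jm; rewrite -rsum_scal; apply: etrans (rsum_widen lt_jm _).
    apply: rsum_ext => i lt_ij; rewrite neg1_pow_sub /c //; ring.
  by move=> i /andP[lt_ji _]; rewrite /c bin_small ?ltnS //=; ring.
rewrite (rsum_ext widen) rsum_swap; apply: rsum_ext => i _.
have := stirling1_binomial_sum m i.+1.
rewrite rsum_first bin0n /= Rmult_0_r Rmult_0_l Rplus_0_l => <-.
by rewrite rsum_scal Rmult_comm.
Qed.

(* Real-linear forms on complex numbers; real and imaginary parts are the
   two we need, and together they determine a complex number. *)
Record real_linear (p : Cx -> R) : Prop := RealLinear {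
  linear0 : p C0 = 0;
  linearD : forall z w, p (Cadd z w) = p z + p w;
  linearZ : forall r z, p (Cscal r z) = r * p z }.

Lemma Re_linear : real_linear Re. Proof. by []. Qed.
Lemma Im_linear : real_linear Im. Proof. by []. Qed.

Lemma Cx_eq_linear (z w : Cx) :
  (forall p, real_linear p -> p z = p w) -> z = w.
Proof.
move=> zw; have := zw _ Re_linear; have := zw _ Im_linear.
by case: z w {zw} => [a b] [c d] /= -> ->.
Qed.

Section RealLinearForm.

Variables (p : Cx -> R) (p_lin : real_linear p).

Lemma linear_Csum1 n f : p (Csum1 n f) = rsum n (fun i => p (f i.+1)).
Proof. by elim: n => [|n /= <-]; rewrite ?linear0 ?linearD. Qed.

Lemma linear_stirling2f alpha j :
  INR j`! * p (stirling2f alpha j) =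
  rsum j (fun i => (-1) ^ (j - i.+1) * INR 'C(j, i.+1) * p (Cnatpow i.+1 alpha)).
Proof.
have fact_neq0 : INR j`! <> 0 by apply/not_0_INR/eqP; rewrite -lt0n fact_gt0.
rewrite /stirling2f linearZ // -Rmult_assoc Rinv_r // Rmult_1_l linear_Csum1.
by apply: rsum_ext => i _; rewrite linearZ.
Qed.

End RealLinearForm.

Theorem proposition3 (m : nat) (alpha : Cx) :
  (0 < m)%nat -> alpha <> C0 ->
  Csum1 m (fun k => Cscal (INR (stirling1 m k)) (Cnatpow k alpha)) =
  Csum1 m (fun j => Cscal (INR (j`!)%nat * INR (stirling1 m.+1 j.+1))
                          (stirling2f alpha j)).
Proof.
move=> _ _; apply: Cx_eq_linear => p p_lin; rewrite !(linear_Csum1 p_lin).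
rewrite (@rsum_ext _ _ (fun k => stirR m k.+1 * p (Cnatpow k.+1 alpha))); last first.
  by move=> k _; rewrite (linearZ p_lin).
rewrite (stirling1_inversion m (fun k => p (Cnatpow k alpha))); apply: rsum_ext => j _.
rewrite (linearZ p_lin) -(linear_stirling2f p_lin); ring.
Qed.
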